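(* Let $n\ge5$ and let $R\in\mathcal C_{1,0}$. Then $R$ lies in the PIC2 cone. Moreover, if $\mathrm{Ric}(R)(v,v)=0$ for some unit vector $v\in\mathbb{R}^n$, then $R=c\,(\mathrm{id}-2\,v\otimes v)\odot\mathrm{id}$ for some constant $c\ge0$ (i.e. either $R=0$ or $R$ is the curvature tensor of a round cylinder $S^{n-1}\times\mathbb{R}$ with axis $v$).
   Context: An algebraic curvature tensor on $\mathbb{R}^n$ is a tensor $R=(R_{ijkl})$ with $R_{ijkl}=-R_{jikl}=R_{klij}$ and $R_{ijkl}+R_{jkil}+R_{kijl}=0$; the unit round sphere has $R_{ijkl}=\delta_{ik}\delta_{jl}-\delta_{il}\delta_{jk}$. We write $\mathrm{Ric}(R)_{ik}=\sum_j R_{ijkj}$, $\mathrm{scal}(R)=\sum_i\mathrm{Ric}(R)_{ii}$, $\mathrm{Ric}_0(R)=\mathrm{Ric}(R)-\frac1n\mathrm{scal}(R)\,\mathrm{id}$. For symmetric bilinear forms $A,B$, $(A\odot B)_{ijkl}=A_{ik}B_{jl}-A_{il}B_{jk}-A_{jk}B_{il}+A_{jl}B_{ik}$; $\mathrm{id}=(\delta_{ij})$. The PIC2 cone is the set of algebraic curvature tensors $R$ with $R(z,w,\bar z,\bar w)\ge0$ for all $z,w\in\mathbb{C}^n$ ($R$ extended complex-multilinearly). For $\sigma\in(0,2]$ and $\theta\ge0$, $\mathcal{C}_{\sigma,\theta}$ denotes the set of algebraic curvature tensors $R$ that can be written $R=S+H\odot\mathrm{id}$, where $S$ is an algebraic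 curvature tensor in the PIC2 cone with $\mathrm{Ric}_0(S)=0$ and $H$ is a symmetric bilinear form with $\mathrm{tr}(H)\,\mathrm{id}-(n-2\sigma)H$ positive semidefinite and $\mathrm{tr}(H)-\theta\,\mathrm{scal}(S)\ge0$. *)

(* Scalars live in an arbitrary numeric closed field C
   (e.g. algC); "real" objects are those with entries in Num.real, and
   C^n plays the role of the complexification of R^n. *)
From HB Require Import structures.
From mathcomp Require Import all_boot all_order all_algebra.
Set Implicit Arguments. Unset Strict Implicit. Unset Printing Implicit Defensive.
Import Order.TTheory GRing.Theory Num.Theory.
Local Open Scope ring_scope.

Section Curv.
Variables (C : numClosedFieldType) (n : nat).

Definition vec := 'I_n -> C.
Definition form := 'I_n -> 'I_n -> C.
Definition tensor4 := 'I_n -> 'I_n -> 'I_n -> 'I_n -> C.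

Definition real_vec (x : vec) : Prop := forall i, x i \is Num.real.
Definition real_form (A : form) : Prop := forall i j, A i j \is Num.real.
Definition real_tensor (R : tensor4) : Prop :=
  forall i j k l, R i j k l \is Num.real.

Definition is_ACT (R : tensor4) : Prop :=
  real_tensor R /\
  (forall i j k l, R i j k l = - R j i k l) /\
  (forall i j k l, R i j k l = R k l i j) /\
  (forall i j k l, R i j k l + R j k i l + R k i j l = 0).

Definition Ric (R : tensor4) : form := fun i k => \sum_(j < n) R i j k j.
Definition scal (R : tensor4) : C := \sum_(i < n) Ric R i i.
Definition idf : form := fun i j => (i == j)%:R.
Definition Ric0 (R : tensor4) : form :=
  fun i k => Ric R i k - (n%:R)^-1 * scal R * idf i k.
Definition tr (H : form) : C := \sum_(i < n) H i i.

Definition odot (A B : form) : tensor4 := fun i j k l =>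
  A i k * B j l - A i l * B j k - A j k * B i l + A j l * B i k.

Definition sym_form (H : form) : Prop :=
  real_form H /\ forall i j, H i j = H j i.

Definition psd (M : form) : Prop :=
  forall x : vec, real_vec x -> 0 <= \sum_(i < n) \sum_(j < n) x i * M i j * x j.

(* PIC2: R(z,w,zbar,wbar) >= 0 for all z, w in C^n (complex-multilinear extension) *)
Definition PIC2 (R : tensor4) : Prop :=
  forall z w : vec,
    0 <= \sum_(i < n) \sum_(j < n) \sum_(k < n) \sum_(l < n)
           R i j k l * z i * w j * (z k)^* * (w l)^*.

Definition cone_C (sigma theta : C) (R : tensor4) : Prop :=
  is_ACT R /\
  exists (S : tensor4) (H : form),
    is_ACT S /\ PIC2 S /\ (forall i k, Ric0 S i k = 0) /\ sym_form H /\
    psd (fun i j => tr H * idf i j - (n%:R - 2 * sigma) * H i j) /\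
    0 <= tr H - theta * scal S /\
    (forall i j k l, R i j k l = S i j k l + odot H idf i j k l).

End Curv.

From Pilot Require Import Defs.
From HB Require Import structures.
From mathcomp Require Import all_boot all_order all_algebra.
From mathcomp Require Import ring.
Set Implicit Arguments. Unset Strict Implicit. Unset Printing Implicit Defensive.
Import Order.TTheory GRing.Theory Num.Theory.
Local Open Scope ring_scope.

(* Write R = S + H ⊙ id and M = tr(H) id - (n-2) H, so M is positive semidefinite.
   For z, w in C^n the quartic form of H ⊙ id at (z, w, z̄, w̄) is <H, P>, where
   P = ω ω^* for ω = z ∧ w.  Summing M(u, ū) over the vectors
   u = ω_qr e_p + ω_rp e_q + ω_pq e_r gives 3 (tr M tr P - 2 <M, P>) = 6 (n-2) <H, P>,
   so H ⊙ id, and with it R, is PIC2.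
   If Ric(R)(v, v) = 0 for a unit v, then 0 = scal(S)/n + (tr M - M(v, v)), a sum of
   two nonnegative terms.  Hence Ric(S) = 0, and a PIC2 curvature tensor with vanishing
   Ricci tensor is zero, since its sectional forms y ↦ S(x, y, x, y) are psd with trace
   Ric(S)(x, x) = 0.  And the psd form M attains its trace at v, which forces
   M = tr M · v ⊗ v; solving for H gives H = tr H / (n-2) · (id - 2 v ⊗ v). *)

Section Curvature.
Variables (C : numClosedFieldType) (n : nat).

Local Notation vec := (vec C n).
Local Notation form := (Defs.form C n).
Local Notation tensor4 := (tensor4 C n).
Local Notation idf := (@idf C n).

Definition bil (A : form) (x y : vec) : C :=
  \sum_(i < n) \sum_(j < n) x i * A i j * y j.
Definition ev (p : 'I_n) : vec := fun a => idf a p.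
Definition conjv (x : vec) : vec := fun i => (x i)^*.
Definition dot (x y : vec) : C := \sum_(i < n) x i * y i.
Definition frob (A B : form) : C := \sum_(a < n) \sum_(b < n) A a b * B a b.

Lemma idfC a b : idf a b = idf b a.
Proof. by rewrite /idf eq_sym. Qed.

Lemma sum_idf_mull p (F : 'I_n -> C) : \sum_(a < n) idf a p * F a = F p.
Proof.
rewrite (bigD1 p) //= big1 => [|a /negbTE ne]; first by rewrite /idf eqxx mul1r addr0.
by rewrite /idf ne mul0r.
Qed.

Lemma sum_idf_mulr p (F : 'I_n -> C) : \sum_(a < n) F a * idf a p = F p.
Proof. by rewrite -[RHS](sum_idf_mull p); apply: eq_bigr => a _; rewrite mulrC. Qed.

Lemma tr_idf : tr idf = n%:R.
Proof.
by rewrite /tr (eq_bigr (fun=> 1)) => [|i _]; rewrite ?sumr_const ?card_ord // /idf eqxx.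
Qed.

Lemma ev_real p : real_vec (ev p).
Proof. by move=> i; rewrite /ev /idf realn. Qed.

Lemma conj_ev p a : (ev p a)^* = ev p a.
Proof. by rewrite /ev /idf rmorph_nat. Qed.

Lemma eq_bil (A : form) (x x' y y' : vec) :
  x =1 x' -> y =1 y' -> bil A x y = bil A x' y'.
Proof. by move=> ex ey; apply: eq_bigr => i _; apply: eq_bigr => j _; rewrite ex ey. Qed.

Lemma bilDl (A : form) (x1 x2 y : vec) :
  bil A (fun i => x1 i + x2 i) y = bil A x1 y + bil A x2 y.
Proof.
rewrite -big_split; apply: eq_bigr => i _; rewrite -big_split.
by apply: eq_bigr => j _; rewrite !mulrDl.
Qed.

Lemma bilDr (A : form) (x y1 y2 : vec) :
  bil A x (fun j => y1 j + y2 j) = bil A x y1 + bil A x y2.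
Proof.
rewrite -big_split; apply: eq_bigr => i _; rewrite -big_split.
by apply: eq_bigr => j _; rewrite mulrDr.
Qed.

Lemma bilZl (A : form) c (x y : vec) : bil A (fun i => c * x i) y = c * bil A x y.
Proof.
rewrite mulr_sumr; apply: eq_bigr => i _; rewrite mulr_sumr.
by apply: eq_bigr => j _; rewrite !mulrA.
Qed.

Lemma bilZr (A : form) c (x y : vec) : bil A x (fun j => c * y j) = c * bil A x y.
Proof.
rewrite mulr_sumr; apply: eq_bigr => i _; rewrite mulr_sumr.
by apply: eq_bigr => j _; rewrite mulrCA.
Qed.

Lemma bil_ev (A : form) p q : bil A (ev p) (ev q) = A p q.
Proof.
rewrite /bil /ev; under eq_bigr => i _ do rewrite sum_idf_mulr.
by rewrite (sum_idf_mull p (fun i => A i q)).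
Qed.

Lemma bilC (A : form) (x y : vec) :
  (forall i j, A i j = A j i) -> bil A x y = bil A y x.
Proof.
move=> symA; rewrite /bil exchange_big; apply: eq_bigr => i _; apply: eq_bigr => j _.
by rewrite symA; ring.
Qed.

Lemma bil_idf (x y : vec) : bil idf x y = dot x y.
Proof.
apply: eq_bigr => i _; rewrite -(sum_idf_mull i (fun j => x i * y j)).
by apply: eq_bigr => j _; rewrite idfC mulrCA mulrA.
Qed.

Lemma bil_lin_form (A X Y : form) a b (x y : vec) :
  (forall i j, A i j = a * X i j + b * Y i j) ->
  bil A x y = a * bil X x y + b * bil Y x y.
Proof.
move=> eA; rewrite /bil !mulr_sumr -big_split; apply: eq_bigr => i _.
by rewrite !mulr_sumr -big_split; apply: eq_bigr => j _; rewrite eA /=; ring.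
Qed.

Definition quart (T : tensor4) (a b c d : vec) : C :=
  \sum_(i < n) \sum_(j < n) \sum_(k < n) \sum_(l < n) T i j k l * a i * b j * c k * d l.

Lemma PIC2E (T : tensor4) :
  PIC2 T <-> forall z w : vec, 0 <= quart T z w (conjv z) (conjv w).
Proof. by []. Qed.

Lemma quart_add (R S T : tensor4) (a b c d : vec) :
  (forall i j k l, R i j k l = S i j k l + T i j k l) ->
  quart R a b c d = quart S a b c d + quart T a b c d.
Proof.
move=> eR; rewrite /quart; do 4 (rewrite -big_split /=; apply: eq_bigr => ? _).
by rewrite eR /=; ring.
Qed.

Lemma quart_ev (T : tensor4) i j k l : quart T (ev i) (ev j) (ev k) (ev l) = T i j k l.
Proof.
rewrite /quart /ev.
under eq_bigr => ? _ do under eq_bigr => ? _ do under eq_bigr => ? _ do rewrite sum_idf_mulr.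
under eq_bigr => ? _ do under eq_bigr => ? _ do rewrite sum_idf_mulr.
under eq_bigr => ? _ do rewrite sum_idf_mulr.
by rewrite sum_idf_mulr.
Qed.

Lemma PIC2_real (T : tensor4) (x y : vec) : PIC2 T -> real_vec x -> real_vec y ->
  0 <= quart T x y x y.
Proof.
move=> PT rx ry; have := PT x y; congr (_ <= _).
by do 4 (apply: eq_bigr => ? _); rewrite !conj_Creal.
Qed.

Lemma PIC2_add (R S T : tensor4) :
  PIC2 S -> PIC2 T -> (forall i j k l, R i j k l = S i j k l + T i j k l) -> PIC2 R.
Proof.
move=> PS PT eR; apply/PIC2E => z w.
by rewrite (quart_add _ _ _ _ eR); exact: addr_ge0 (PS z w) (PT z w).
Qed.

Lemma sum4_mul (X Y : form) :
  \sum_(i < n) \sum_(j < n) \sum_(k < n) \sum_(l < n) X i k * Y j l =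
  (\sum_(i < n) \sum_(k < n) X i k) * (\sum_(j < n) \sum_(l < n) Y j l).
Proof.
rewrite mulr_suml; apply: eq_bigr => i _; rewrite exchange_big mulr_suml.
by apply: eq_bigr => k _; rewrite mulr_sumr; apply: eq_bigr => j _; rewrite mulr_sumr.
Qed.

Lemma quart_odot (A B : form) (a b c d : vec) :
  quart (odot A B) a b c d =
  bil A a c * bil B b d - bil A a d * bil B b c
  - bil A b c * bil B a d + bil A b d * bil B a c.
Proof.
have e1 : bil A a c * bil B b d = \sum_(i < n) \sum_(j < n) \sum_(k < n) \sum_(l < n)
    (a i * A i k * c k) * (b j * B j l * d l) by rewrite sum4_mul.
have e2 : bil A a d * bil B b c = \sum_(i < n) \sum_(j < n) \sum_(k < n) \sum_(l < n)
    (a i * A i l * d l) * (b j * B j k * c k).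
  by rewrite -sum4_mul; apply: eq_bigr => i _; apply: eq_bigr => j _; rewrite exchange_big.
have e3 : bil A b c * bil B a d = \sum_(i < n) \sum_(j < n) \sum_(k < n) \sum_(l < n)
    (b j * A j k * c k) * (a i * B i l * d l) by rewrite -sum4_mul exchange_big.
have e4 : bil A b d * bil B a c = \sum_(i < n) \sum_(j < n) \sum_(k < n) \sum_(l < n)
    (b j * A j l * d l) * (a i * B i k * c k).
  rewrite -sum4_mul exchange_big.
  by apply: eq_bigr => i _; apply: eq_bigr => j _; rewrite exchange_big.
rewrite e1 e2 e3 e4 -!sumrB -big_split /=; apply: eq_bigr => i _.
rewrite -!sumrB -big_split /=; apply: eq_bigr => j _.
rewrite -!sumrB -big_split /=; apply: eq_bigr => k _.
rewrite -!sumrB -big_split /=; apply: eq_bigr => l _.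
by rewrite /odot; ring.
Qed.

Definition wedge (z w : vec) : form := fun a b => z a * w b - z b * w a.
Definition wedge_gram (z w : vec) : form :=
  fun a b => \sum_(j < n) wedge z w a j * (wedge z w b j)^*.

Lemma wedgeN (z w : vec) a b : wedge z w a b = - wedge z w b a.
Proof. by rewrite /wedge opprB mulrC [z b * _]mulrC. Qed.

Lemma wedge_gramE (z w : vec) a b :
  wedge_gram z w a b = dot w (conjv w) * (z a * (z b)^*) - dot w (conjv z) * (z a * (w b)^*)
    - dot z (conjv w) * (w a * (z b)^*) + dot z (conjv z) * (w a * (w b)^*).
Proof.
rewrite /wedge_gram /dot /conjv !mulr_suml -!sumrB -big_split /=; apply: eq_bigr => j _.
by rewrite /wedge rmorphB !rmorphM; ring.
Qed.

Lemma frob_outer (A : form) (x y : vec) : frob A (fun a b => x a * y b) = bil A x y.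
Proof. by apply: eq_bigr => a _; apply: eq_bigr => b _; ring. Qed.

Lemma quart_odot_idf (A : form) (z w : vec) :
  quart (odot A idf) z w (conjv z) (conjv w) = frob A (wedge_gram z w).
Proof.
rewrite quart_odot !bil_idf -!frob_outer /frob !mulr_suml -!sumrB -big_split /=.
apply: eq_bigr => a _; rewrite !mulr_suml -!sumrB -big_split /=; apply: eq_bigr => b _.
by rewrite wedge_gramE; ring.
Qed.

Lemma psd_herm (M : form) (u : vec) :
  (forall i j, M i j = M j i) -> psd M -> 0 <= bil M u (conjv u).
Proof.
move=> symM psdM.
pose re : vec := fun i => 'Re (u i); pose im : vec := fun i => 'Im (u i).
suff -> : bil M u (conjv u) = bil M re re + bil M im im.
  by apply: addr_ge0; apply: psdM => i; rewrite ?Creal_Re ?Creal_Im.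
rewrite (@eq_bil M u (fun i => re i + 'i * im i) _ (fun i => re i + - 'i * im i)).
- by rewrite !bilDl !bilDr !bilZl !bilZr (bilC im re symM); ring: (@mulCii C).
- by move=> i; rewrite -Crect.
- by move=> i; rewrite /conjv [u i]Crect conjC_rect ?Creal_Re ?Creal_Im // mulNr.
Qed.

Lemma sum3D (G1 G2 : 'I_n -> 'I_n -> 'I_n -> C) :
  \sum_(p < n) \sum_(q < n) \sum_(r < n) (G1 p q r + G2 p q r) =
  \sum_(p < n) \sum_(q < n) \sum_(r < n) G1 p q r + \sum_(p < n) \sum_(q < n) \sum_(r < n) G2 p q r.
Proof.
rewrite -big_split; apply: eq_bigr => p _; rewrite -big_split; apply: eq_bigr => q _.
exact: big_split.
Qed.

Lemma sum3_rot (G : 'I_n -> 'I_n -> 'I_n -> C) :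
  \sum_(p < n) \sum_(q < n) \sum_(r < n) G q r p = \sum_(p < n) \sum_(q < n) \sum_(r < n) G p q r.
Proof. by rewrite exchange_big; apply: eq_bigr => q _; rewrite exchange_big. Qed.

Lemma sum3_cyclic (G : 'I_n -> 'I_n -> 'I_n -> C) :
  \sum_(p < n) \sum_(q < n) \sum_(r < n) (G p q r + G q r p + G r p q) =
  3 * \sum_(p < n) \sum_(q < n) \sum_(r < n) G p q r.
Proof.
rewrite !sum3D (sum3_rot G) -(sum3_rot (fun p q r => G r p q)).
by rewrite mulr_natl mulrS mulrS mulr1n addrA.
Qed.

Definition wedge_cycle (z w : vec) (p q r : 'I_n) : vec := fun a =>
  wedge z w q r * ev p a + wedge z w r p * ev q a + wedge z w p q * ev r a.

Lemma sum_wedge_cycle_row (M : form) (z w : vec) : (forall i j, M i j = M j i) ->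
  \sum_(p < n) \sum_(q < n) \sum_(r < n) wedge z w q r *
     ((wedge z w q r)^* * M p p + (wedge z w r p)^* * M p q + (wedge z w p q)^* * M p r)
  = tr M * tr (wedge_gram z w) - 2 * frob M (wedge_gram z w).
Proof.
move=> symM; set P := wedge_gram z w; set om := wedge z w.
under eq_bigr => p _ do under eq_bigr => q _ do under eq_bigr => r _ do rewrite !mulrDr.
rewrite !sum3D.
have -> : \sum_(p < n) \sum_(q < n) \sum_(r < n) om q r * ((om q r)^* * M p p) = tr M * tr P.
  rewrite /tr mulr_suml; apply: eq_bigr => p _; rewrite mulrC mulr_suml.
  apply: eq_bigr => q _; rewrite /P /wedge_gram mulr_suml.
  by apply: eq_bigr => r _; rewrite /om; ring.
have -> : \sum_(p < n) \sum_(q < n) \sum_(r < n) om q r * ((om r p)^* * M p q) = - frob M P.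
  rewrite /frob [in RHS]exchange_big -sumrN; apply: eq_bigr => p _; rewrite -sumrN.
  apply: eq_bigr => q _; rewrite /P /wedge_gram mulr_sumr -sumrN; apply: eq_bigr => r _.
  by rewrite /om (wedgeN z w r p) rmorphN symM; ring.
have -> : \sum_(p < n) \sum_(q < n) \sum_(r < n) om q r * ((om p q)^* * M p r) = - frob M P.
  rewrite /frob [in RHS]exchange_big -sumrN; apply: eq_bigr => p _.
  rewrite [in LHS]exchange_big -sumrN.
  apply: eq_bigr => r _; rewrite /P /wedge_gram mulr_sumr -sumrN; apply: eq_bigr => q _.
  by rewrite /om (wedgeN z w q r) symM; ring.
ring.
Qed.

Lemma sum_herm_wedge_cycle (M : form) (z w : vec) : (forall i j, M i j = M j i) ->
  \sum_(p < n) \sum_(q < n) \sum_(r < n)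
     bil M (wedge_cycle z w p q r) (conjv (wedge_cycle z w p q r))
  = 3 * (tr M * tr (wedge_gram z w) - 2 * frob M (wedge_gram z w)).
Proof.
move=> symM; rewrite -sum_wedge_cycle_row // -sum3_cyclic.
apply: eq_bigr => p _; apply: eq_bigr => q _; apply: eq_bigr => r _.
rewrite (@eq_bil M _ (wedge_cycle z w p q r) _ (fun a => (wedge z w q r)^* * ev p a
    + (wedge z w r p)^* * ev q a + (wedge z w p q)^* * ev r a)) //; last first.
  by move=> a; rewrite /conjv /wedge_cycle ![in LHS]rmorphD ![in LHS]rmorphM /= !conj_ev.
by rewrite /wedge_cycle !bilDl !bilZl !bilDr !bilZr !bil_ev; ring.
Qed.

Definition cone_form (H : form) : form := fun i j => tr H * idf i j - (n%:R - 2) * H i j.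

Lemma cone_formC (H : form) : (forall i j, H i j = H j i) ->
  forall i j, cone_form H i j = cone_form H j i.
Proof. by move=> symH i j; rewrite /cone_form idfC symH. Qed.

Lemma tr_cone_form (H : form) : tr (cone_form H) = 2 * tr H.
Proof. by rewrite /tr sumrB -!mulr_sumr -/(tr idf) tr_idf -/(tr H); ring. Qed.

Lemma frob_cone_form (H P : form) :
  frob (cone_form H) P = tr H * tr P - (n%:R - 2) * frob H P.
Proof.
rewrite /frob /tr mulr_sumr mulr_sumr -sumrB; apply: eq_bigr => a _.
rewrite -(sum_idf_mull a (fun b => tr H * P a b)) mulr_sumr -sumrB.
by apply: eq_bigr => b _; rewrite /cone_form idfC; ring.
Qed.

Lemma PIC2_odot_idf (H : form) : (2 < n)%N -> (forall i j, H i j = H j i) ->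
  psd (cone_form H) -> PIC2 (odot H idf).
Proof.
move=> n_gt2 symH psdM; apply/PIC2E => z w; rewrite quart_odot_idf.
have : 0 <= \sum_(p < n) \sum_(q < n) \sum_(r < n)
    bil (cone_form H) (wedge_cycle z w p q r) (conjv (wedge_cycle z w p q r)).
  by do 3 (apply: sumr_ge0 => ? _); apply: psd_herm => //; apply: cone_formC.
rewrite sum_herm_wedge_cycle; last exact: cone_formC.
rewrite tr_cone_form frob_cone_form.
have -> : forall t P F : C, 3 * (2 * t * P - 2 * (t * P - (n%:R - 2) * F)) = 6 * (n%:R - 2) * F.
  by move=> t P F; ring.
by rewrite pmulr_rge0 // mulr_gt0 // subr_gt0 ltr_nat.
Qed.

Lemma bil_quad (M : form) (u y : vec) t : (forall i j, M i j = M j i) ->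
  bil M (fun i => u i + t * y i) (fun i => u i + t * y i) =
  bil M u u + 2 * t * bil M u y + t ^+ 2 * bil M y y.
Proof. by move=> symM; rewrite !bilDl !bilDr !bilZl !bilZr (bilC y u symM); ring. Qed.

Lemma psd_null (M : form) (u y : vec) : (forall i j, M i j = M j i) -> psd M ->
  real_vec u -> real_vec y -> bil M u u = 0 -> bil M u y = 0.
Proof.
move=> symM psdM ru ry uu0.
have quad t : t \is Num.real -> 0 <= 2 * t * bil M u y + t ^+ 2 * bil M y y.
  move=> rt; have := psdM _ (fun i => rpredD (ru i) (rpredM rt (ry i))).
  by rewrite -/(bil M _ _) bil_quad // uu0 add0r.
set b := bil M u y in quad *; set c := bil M y y in quad.
have c_ge0 : 0 <= c := psdM y ry.
have b_real : b \is Num.real.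
  have /ger0_real := quad 1 (rpred1 _).
  rewrite expr1n mul1r mulr1 (rpredDr _ (ger0_real c_ge0)) => b2_real.
  have two_neq0 : (2 : C) != 0 by rewrite pnatr_eq0.
  by rewrite -[b](mulKf two_neq0) rpredM ?rpredV ?realn.
have c1_gt0 : 0 < c + 1 by rewrite ltr_wpDl.
have t_real : - b / (c + 1) \is Num.real.
  by rewrite rpredM ?rpredN ?rpredV ?rpredD ?realn // ger0_real.
have := quad _ t_real.
have -> : 2 * (- b / (c + 1)) * b + (- b / (c + 1)) ^+ 2 * c =
          - (b ^+ 2 * (c + 2)) / (c + 1) ^+ 2 by field; rewrite gt_eqF.
rewrite pmulr_lge0 ?invr_gt0 ?exprn_gt0 // oppr_ge0 pmulr_lle0 ?ltr_wpDl //.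
move=> b2_le0; apply/eqP; rewrite -sqrf_eq0 eq_le b2_le0 /=.
by rewrite -realEsqr.
Qed.

Lemma psd_tr0 (M : form) : (forall i j, M i j = M j i) -> psd M -> tr M = 0 ->
  forall i j, M i j = 0.
Proof.
move=> symM psdM trM0 i j.
have ii0 : bil M (ev i) (ev i) = 0.
  rewrite bil_ev; apply: (psumr_eq0P _ trM0) => // k _.
  by rewrite -bil_ev; apply: psdM; apply: ev_real.
by rewrite -bil_ev (psd_null symM psdM (ev_real i) (ev_real j) ii0).
Qed.

Definition rotv (v : vec) (p q : 'I_n) : vec := fun a => v q * ev p a + - v p * ev q a.

Lemma rotv_real (v : vec) p q : real_vec v -> real_vec (rotv v p q).
Proof. by move=> rv a; rewrite rpredD ?rpredM ?rpredN ?rv ?ev_real. Qed.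

Lemma sum_bil_rotv (M : form) (v : vec) :
  \sum_(p < n) \sum_(q < n) bil M (rotv v p q) (rotv v p q) = 2 * (tr M * dot v v - bil M v v).
Proof.
have half : \sum_(p < n) \sum_(q < n) (M p p * (v q * v q) - v p * M p q * v q) =
            tr M * dot v v - bil M v v.
  rewrite /bil /tr /dot mulr_suml -sumrB; apply: eq_bigr => p _.
  by rewrite mulr_sumr -sumrB.
rewrite mulr_natl mulr2n -half [X in _ + X]exchange_big -big_split; apply: eq_bigr => p _.
rewrite -big_split; apply: eq_bigr => q _ /=.
by rewrite /rotv !bilDl !bilZl !bilDr !bilZr !bil_ev; ring.
Qed.

Lemma psd_bil_le_tr (M : form) (v : vec) :
  psd M -> real_vec v -> dot v v = 1 -> bil M v v <= tr M.
Proof.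
move=> psdM rv vv1; rewrite -subr_ge0 -[_ - _]mul1r -vv1.
have : 0 <= \sum_(p < n) \sum_(q < n) bil M (rotv v p q) (rotv v p q).
  by do 2 (apply: sumr_ge0 => ? _); apply: psdM; apply: rotv_real.
by rewrite sum_bil_rotv vv1 mul1r mulr1 pmulr_rge0.
Qed.

Lemma psd_rank_one (M : form) (v : vec) : (forall i j, M i j = M j i) -> psd M ->
  real_vec v -> dot v v = 1 -> bil M v v = tr M ->
  forall i j, M i j = tr M * (v i * v j).
Proof.
move=> symM psdM rv vv1 vv_tr.
have rot_ge0 p q : 0 <= bil M (rotv v p q) (rotv v p q).
  by apply: psdM; apply: rotv_real.
have null p q k : v q * M p k = v p * M q k.
  have sum0 : \sum_(p < n) \sum_(q < n) bil M (rotv v p q) (rotv v p q) = 0.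
    by rewrite sum_bil_rotv vv1 mulr1 vv_tr subrr mulr0.
  have row0 : \sum_(q < n) bil M (rotv v p q) (rotv v p q) = 0.
    by apply: (psumr_eq0P _ sum0) => // p' _; apply: sumr_ge0.
  have rot0 : bil M (rotv v p q) (rotv v p q) = 0 by apply: (psumr_eq0P _ row0).
  have := psd_null symM psdM (rotv_real p q rv) (ev_real k) rot0.
  by rewrite /rotv bilDl !bilZl !bil_ev mulNr => /eqP; rewrite subr_eq0 => /eqP.
pose g k := \sum_(q < n) v q * M q k.
have Mg i j : M i j = v i * g j.
  rewrite -[LHS]mulr1 -vv1 /dot /g !mulr_sumr; apply: eq_bigr => q _.
  by rewrite mulrA [M i j * v q]mulrC null; ring.
have gv j : g j = v j * bil M v v.
  have -> : bil M v v = \sum_(q < n) v q * g q.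
    rewrite /bil /g exchange_big; apply: eq_bigr => q _; rewrite mulr_sumr.
    by apply: eq_bigr => p _; ring.
  rewrite /g mulr_sumr; apply: eq_bigr => q _.
  by rewrite symM Mg -/(g q); ring.
by move=> i j; rewrite Mg gv vv_tr; ring.
Qed.

Definition sec_form (S : tensor4) (x : vec) : form :=
  fun j l => bil (fun i k => S i j k l) x x.

Lemma quart_sec_form (S : tensor4) (x y : vec) :
  quart S x y x y = bil (sec_form S x) y y.
Proof.
rewrite /quart exchange_big; apply: eq_bigr => j _.
under eq_bigr => i _ do rewrite exchange_big.
rewrite exchange_big; apply: eq_bigr => l _.
rewrite /sec_form /bil mulr_sumr mulr_suml; apply: eq_bigr => i _.
by rewrite mulr_sumr mulr_suml; apply: eq_bigr => k _; ring.
Qed.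

Lemma tr_sec_form (S : tensor4) (x : vec) : tr (sec_form S x) = bil (Ric S) x x.
Proof.
rewrite /tr /sec_form /bil /Ric exchange_big; apply: eq_bigr => i _.
rewrite exchange_big; apply: eq_bigr => k _.
by rewrite mulr_sumr mulr_suml; apply: eq_bigr => j _; ring.
Qed.

Lemma sec_formC (S : tensor4) (x : vec) :
  is_ACT S -> forall j l, sec_form S x j l = sec_form S x l j.
Proof.
move=> [_ [_ [pairS _]]] j l.
rewrite /sec_form /bil [RHS]exchange_big; apply: eq_bigr => i _; apply: eq_bigr => k _.
by rewrite pairS; ring.
Qed.

Lemma ACT_eq0_of_swap (S : tensor4) : is_ACT S ->
  (forall i j k l, S i j k l + S k j i l = 0) -> forall i j k l, S i j k l = 0.
Proof.
move=> [_ [antiS [_ bianchiS]]] swapS.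
have sw i j k l : S k j i l = - S i j k l by apply/eqP; rewrite -addr_eq0 addrC swapS.
move=> i j k l.
have e1 : S j k i l = S i j k l by rewrite antiS sw opprK.
have e2 : S k i j l = S i j k l by rewrite antiS sw e1 opprK.
have /eqP : 3 * S i j k l = 0 by rewrite -(bianchiS i j k l) e1 e2; ring.
by rewrite mulf_eq0 pnatr_eq0 => /eqP.
Qed.

Lemma PIC2_Ric0_eq0 (S : tensor4) : is_ACT S -> PIC2 S ->
  (forall i k, Ric S i k = 0) -> forall i j k l, S i j k l = 0.
Proof.
move=> actS picS Ric0.
have sec0 (x : vec) : real_vec x -> forall j l, sec_form S x j l = 0.
  move=> rx; apply: psd_tr0; first exact: sec_formC.
    move=> y ry; rewrite -/(bil (sec_form S x) y y) -quart_sec_form.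
    exact: PIC2_real.
  rewrite tr_sec_form /bil big1 // => i _.
  by rewrite big1 // => k _; rewrite Ric0 mulr0 mul0r.
apply: ACT_eq0_of_swap => // i j k l.
have := sec0 _ (fun a => rpredD (ev_real i a) (ev_real k a)) j l.
rewrite /sec_form bilDl !bilDr !bil_ev.
have := sec0 _ (ev_real i) j l; rewrite /sec_form bil_ev => ->.
have := sec0 _ (ev_real k) j l; rewrite /sec_form bil_ev => ->.
by rewrite add0r addr0.
Qed.

Lemma Ric_add (R S T : tensor4) : (forall i j k l, R i j k l = S i j k l + T i j k l) ->
  forall i k, Ric R i k = Ric S i k + Ric T i k.
Proof. by move=> eR i k; rewrite /Ric -big_split; apply: eq_bigr => j _; rewrite eR. Qed.

Lemma Ric_odot_idf (A : form) i k :
  Ric (odot A idf) i k = (n%:R - 2) * A i k + tr A * idf i k.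
Proof.
rewrite /Ric /odot (eq_bigr (fun j => A i k * idf j j - A i j * idf j k
    - idf j i * A j k + A j j * idf i k)) => [|j _]; last by rewrite (idfC i j); ring.
rewrite big_split /= !sumrB sum_idf_mulr sum_idf_mull -mulr_sumr -mulr_suml.
by rewrite -/(tr idf) tr_idf -/(tr A); ring.
Qed.

Lemma scal_ge0 (S : tensor4) : PIC2 S -> 0 <= scal S.
Proof.
move=> picS; apply: sumr_ge0 => i _; apply: sumr_ge0 => j _.
by rewrite -quart_ev; apply: PIC2_real => //; apply: ev_real.
Qed.

Lemma Ric_odot_cone (H : form) (v : vec) :
  bil (Ric (odot H idf)) v v = tr (cone_form H) * dot v v - bil (cone_form H) v v.
Proof.
rewrite (bil_lin_form _ _ (Ric_odot_idf H)) tr_cone_form.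
rewrite (@bil_lin_form (cone_form H) idf H (tr H) (- (n%:R - 2))) => [|i j].
  by rewrite !bil_idf; ring.
by rewrite /cone_form mulNr.
Qed.

Lemma Ric_Ric0 (S : tensor4) : (forall i k, Ric0 S i k = 0) ->
  forall i k, Ric S i k = n%:R^-1 * scal S * idf i k.
Proof. by move=> Ric0S i k; apply/subr0_eq/Ric0S. Qed.

Lemma bil_Ric_split (R S : tensor4) (H : form) (v : vec) :
  (forall i k, Ric0 S i k = 0) ->
  (forall i j k l, R i j k l = S i j k l + odot H idf i j k l) ->
  bil (Ric R) v v =
    n%:R^-1 * scal S * dot v v + (tr (cone_form H) * dot v v - bil (cone_form H) v v).
Proof.
move=> Ric0S eR; rewrite -Ric_odot_cone -bil_idf -[bil (Ric _) v v in RHS]mul1r.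
by apply: bil_lin_form => i k; rewrite (Ric_add eR) (Ric_Ric0 Ric0S); ring.
Qed.

Lemma cone_form_rank_one (H : form) (v : vec) : (2 < n)%N ->
  (forall i j, cone_form H i j = 2 * tr H * (v i * v j)) ->
  forall i j, H i j = tr H / (n%:R - 2) * (idf i j - 2 * v i * v j).
Proof.
move=> n_gt2 eM i j.
have n2_neq0 : (n%:R - 2 : C) != 0 by rewrite gt_eqF ?subr_gt0 ?ltr_nat.
have -> : H i j = (tr H * idf i j - cone_form H i j) / (n%:R - 2) by rewrite /cone_form; field.
by rewrite eM; field.
Qed.

End Curvature.

Theorem proposition2p3 (C : numClosedFieldType) (n : nat) (R : tensor4 C n) :
  (5 <= n)%N ->
  cone_C 1 0 R ->
  PIC2 R /\
  (forall v : vec C n,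
     real_vec v ->
     \sum_(i < n) v i * v i = 1 ->
     \sum_(i < n) \sum_(k < n) Ric R i k * v i * v k = 0 ->
     exists c : C, 0 <= c /\
       forall i j k l,
         R i j k l = c * odot (fun a b : 'I_n => @idf C n a b - 2 * v a * v b) (@idf C n) i j k l).
Proof.
move=> n_ge5 [_ [S [H [actS [picS [Ric0S [[_ symH] [psdM [trH_ge0 eR]]]]]]]]].
have n_gt2 : (2 < n)%N by apply: leq_trans n_ge5.
rewrite mulr1 in psdM.
split; first exact: PIC2_add picS (PIC2_odot_idf n_gt2 symH psdM) eR.
move=> v rv vv1 Ric_vv; rewrite -/(dot v v) in vv1.
have : bil (Ric R) v v = 0.
  by rewrite -Ric_vv; apply: eq_bigr => i _; apply: eq_bigr => k _; ring.
rewrite (bil_Ric_split _ Ric0S eR) vv1 !mulr1 => /eqP.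
rewrite paddr_eq0 ?mulr_ge0 ?invr_ge0 ?ler0n ?scal_ge0 ?subr_ge0 ?psd_bil_le_tr //.
move=> /andP [/eqP scal0 /eqP gap0].
have S0 : forall i j k l, S i j k l = 0.
  by apply: PIC2_Ric0_eq0 => // i k; rewrite (Ric_Ric0 Ric0S) scal0 mul0r.
have /(psd_rank_one (cone_formC symH) psdM rv vv1) : bil (cone_form H) v v = tr (cone_form H).
  by apply/eqP; rewrite eq_sym -subr_eq0 gap0.
rewrite tr_cone_form => /(cone_form_rank_one n_gt2) eH.
exists (tr H / (n%:R - 2)); split.
  apply: divr_ge0; first by move: trH_ge0; rewrite mul0r subr0.
  by rewrite ltW // subr_gt0 ltr_nat.
by move=> i j k l; rewrite eR S0 add0r /odot !eH; ring.
Qed.
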